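(* Let $\epsilon>0$, let $\mathbf{w}\in\mathbb{R}^d$ be non-increasing, and let $1\le k\le d-1$ with $\mathbf{w}^k_{max}>\mathbf{w}^k_{min}$. The additive mechanism with parameters $(\epsilon,\mathbf{w},k)$ satisfies $\epsilon$-local differential privacy: for all scored votes $v,v'\in\mathbb{D}_v$ and every $S\in\mathcal{C}^k$, $\Pr[S\mid v]\le e^\epsilon\Pr[S\mid v']$.
   Context: Candidates are $C_1,\dots,C_d$; a vote is a linear ordering; with non-increasing score vector $\mathbf{w}$ the scored vote $v$ assigns score $w_j$ to the candidate at rank $j$; $\mathbb{D}_v$ is the set of permutations of $\mathbf{w}$. Let $\mathcal{C}^k$ be the set of $k$-element subsets of $\{C_1,\dots,C_d\}$, $\mathbf{w}^k_{max}=\sum_{j=1}^kw_j$, $\mathbf{w}^k_{min}=\sum_{j=d-k+1}^dw_j$, $W=\sum_{j=1}^dw_j$. The additive mechanism on input $v$ outputs $S\in\mathcal{C}^k$ with probability $$\Pr[S\mid v]=\frac{\sum_{C_{j'}\in S}v_{j'}-\mathbf{w}^k_{min}}{\mathbf{w}^k_{max}-\mathbf{w}^k_{min}}\cdot\frac{e^\epsilon-1}{\Phi}+\frac1\Phi,\qquad \Phi=\binom dk\frac{\frac kd(e^\epsilon-1)W-e^\epsilon\mathbf{w}^k_{min}+\mathbf{w}^k_{max}}{\mathbf{w}^k_{max}-\mathbf{w}^k_{min}},$$ and releases the private view $\tilde v_j=a_k\cdot[C_j\in S]-b_k$ ($j=1,\dots,d$) for constants $a_k,b_k$ depending only on $\epsilon,\mathbf{w},k,d$.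 *)

From HB Require Import structures.
From mathcomp Require Import all_boot all_order all_algebra perm.
From mathcomp Require Import reals.
From mathcomp Require Import sequences exp.
Set Implicit Arguments. Unset Strict Implicit. Unset Printing Implicit Defensive.
Import Order.TTheory GRing.Theory Num.Theory.
Local Open Scope ring_scope.

(* Candidates C_1..C_d are indexed by 'I_d (C_{j+1} <-> j).  A score vector
   w : 'I_d -> R; rank j+1 gets score w j. *)

Definition nonincreasing (R : realType) (d : nat) (w : 'I_d -> R) : Prop :=
  forall i j : 'I_d, (i <= j)%N -> w j <= w i.

Definition scored_vote (R : realType) (d : nat) (w : 'I_d -> R) (v : 'I_d -> R)
  : Prop := exists s : 'S_d, forall j : 'I_d, v j = w (s j).

(* w^k_max = sum of the k largest scores (first k ranks). *)
Definition wmax (R : realType) (d : nat) (w : 'I_d -> R) (k : nat) : R :=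
  \sum_(j < d | (j < k)%N) w j.

(* w^k_min = sum of the k smallest scores (last k ranks d-k+1..d). *)
Definition wmin (R : realType) (d : nat) (w : 'I_d -> R) (k : nat) : R :=
  \sum_(j < d | (d - k <= j)%N) w j.

Definition Wsum (R : realType) (d : nat) (w : 'I_d -> R) : R := \sum_(j < d) w j.

Definition Phi (R : realType) (eps : R) (d : nat) (w : 'I_d -> R) (k : nat) : R :=
  ('C(d, k))%:R *
  ((k%:R / d%:R) * (expR eps - 1) * Wsum w - expR eps * wmin w k + wmax w k)
  / (wmax w k - wmin w k).

(* Pr[S | v] of the additive mechanism with parameters (eps, w, k). *)
Definition additive_prob (R : realType) (eps : R) (d : nat) (w : 'I_d -> R)
  (k : nat) (v : 'I_d -> R) (S : {set 'I_d}) : R :=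
  (\sum_(j in S) v j - wmin w k) / (wmax w k - wmin w k)
    * ((expR eps - 1) / Phi eps w k)
  + 1 / Phi eps w k.

(* The additive mechanism outputs S with probability (1 + (e^eps - 1) a) / Phi,
   where a = (sum_S v - wmin) / (wmax - wmin) is the normalized score of S
   under v.  Since the sum of the scores of k candidates lies between the sum
   of the k smallest and the k largest scores, a lies in [0, 1], so every
   output probability lies in [1 / Phi, e^eps / Phi] and any two of them are
   within a factor e^eps.  It remains to see that Phi > 0: its numerator is
   (e^eps - 1) ((k/d) W - wmin) + (wmax - wmin), and (k/d) W >= wmin because
   the k smallest scores average at most the mean score. *)

From HB Require Import structures.
From mathcomp Require Import all_boot all_order all_algebra perm.
From mathcomp Require Import reals.
From mathcomp Require Import sequences exp.
From mathcomp Require Import ring.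
Set Implicit Arguments. Unset Strict Implicit. Unset Printing Implicit Defensive.
Import Order.TTheory GRing.Theory Num.Theory.
Local Open Scope ring_scope.

Section SumsOverSubsets.

Variables (R : numDomainType) (T : finType) (w : T -> R).

Lemma ler_card_sum_sep (A B : {set T}) :
  {in A & B, forall i j, w i <= w j} ->
  #|B|%:R * \sum_(i in A) w i <= #|A|%:R * \sum_(j in B) w j.
Proof.
move=> le_AB; rewrite !mulr_natl -!sumr_const exchange_big /=.
by apply: ler_sum => i iA; apply: ler_sum => j jB; exact: le_AB.
Qed.

Lemma ler_sum_exchange (A B : {set T}) :
  #|A| = #|B| -> {in A :\: B & B :\: A, forall i j, w i <= w j} ->
  \sum_(i in A) w i <= \sum_(j in B) w j.
Proof.
move=> cardAB le_AB.
have card_diff : #|A :\: B| = #|B :\: A|.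
  by apply/eqP; rewrite -(eqn_add2l #|A :&: B|) cardsID setIC cardsID cardAB.
rewrite (big_setID B) [leRHS](big_setID A) /= setIC lerD2l.
have [n0 | n_gt0] := posnP #|B :\: A|.
  by rewrite (cards0_eq n0) (cards0_eq (etrans card_diff n0)) !big_set0.
have n_pos : (0 : R) < #|B :\: A|%:R by rewrite ltr0n.
by have := ler_card_sum_sep le_AB; rewrite card_diff ler_pM2l.
Qed.

End SumsOverSubsets.

Definition top_ranks (d k : nat) : {set 'I_d} := [set j : 'I_d | (j < k)%N].

Definition bottom_ranks (d k : nat) : {set 'I_d} := ~: top_ranks d (d - k).

Lemma card_top_ranks (d k : nat) : (k <= d)%N -> #|top_ranks d k| = k.
Proof.
move=> k_le_d; rewrite -sum1_card.
rewrite (eq_bigl (fun j : 'I_d => (j < k)%N)) => [|j]; last by rewrite inE.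
by rewrite -(big_ord_widen _ (fun=> 1%N) k_le_d) sum1_card card_ord.
Qed.

Lemma card_bottom_ranks (d k : nat) : (k <= d)%N -> #|bottom_ranks d k| = k.
Proof.
by move=> k_le_d; rewrite cardsCs setCK card_ord card_top_ranks ?leq_subr ?subKn.
Qed.

Lemma wmaxE (R : realType) (d : nat) (w : 'I_d -> R) (k : nat) :
  wmax w k = \sum_(j in top_ranks d k) w j.
Proof. by apply: eq_bigl => j; rewrite inE. Qed.

Lemma wminE (R : realType) (d : nat) (w : 'I_d -> R) (k : nat) :
  wmin w k = \sum_(j in bottom_ranks d k) w j.
Proof. by apply: eq_bigl => j; rewrite !inE -leqNgt. Qed.

Lemma scored_vote_sum (R : realType) (d : nat) (w v : 'I_d -> R)
    (S : {set 'I_d}) :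
  scored_vote w v ->
  exists2 A : {set 'I_d}, #|A| = #|S| & \sum_(j in S) v j = \sum_(j in A) w j.
Proof.
case=> s vE; exists (s @: S); first exact/card_imset/perm_inj.
rewrite big_imset /=; last by move=> i j _ _; apply: perm_inj.
by apply: eq_bigr => j _; rewrite vE.
Qed.

Section ScoreBounds.

Variables (R : realType) (d k : nat) (w : 'I_d -> R).
Hypotheses (w_noninc : nonincreasing w) (k_le_d : (k <= d)%N).

Lemma wmin_le_sum (A : {set 'I_d}) : #|A| = k -> wmin w k <= \sum_(j in A) w j.
Proof.
move=> cardA; rewrite wminE; apply: ler_sum_exchange.
  by rewrite card_bottom_ranks.
move=> i j; rewrite !inE -leqNgt negbK => /andP[_ i_bot] /andP[j_top _].
by apply: w_noninc; apply: leq_trans i_bot; exact: ltnW.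
Qed.

Lemma sum_le_wmax (A : {set 'I_d}) : #|A| = k -> \sum_(j in A) w j <= wmax w k.
Proof.
move=> cardA; rewrite wmaxE; apply: ler_sum_exchange.
  by rewrite card_top_ranks.
move=> i j; rewrite !inE -leqNgt => /andP[i_bot _] /andP[_ j_top].
by apply: w_noninc; apply: leq_trans i_bot; exact: ltnW.
Qed.

Lemma wmin_le_avg : d%:R * wmin w k <= k%:R * Wsum w.
Proof.
set B := bottom_ranks d k.
have sep : #|~: B|%:R * wmin w k <= #|B|%:R * \sum_(j in ~: B) w j.
  rewrite wminE; apply: ler_card_sum_sep => i j.
  rewrite !inE negbK -leqNgt => i_bot j_top.
  by apply: w_noninc; apply: leq_trans i_bot; exact: ltnW.
have W_split : Wsum w = wmin w k + \sum_(j in ~: B) w j.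
  rewrite wminE /Wsum (bigID (mem B)) /=; congr (_ + _).
  by apply: eq_bigl => j; rewrite [in RHS]in_setC.
rewrite card_bottom_ranks // in sep.
have d_split : d%:R = k%:R + #|~: B|%:R :> R.
  by rewrite -{1}(card_bottom_ranks k_le_d) -natrD cardsC card_ord.
by rewrite d_split mulrDl W_split mulrDr lerD2l.
Qed.

Lemma scored_vote_sum_bounds (v : 'I_d -> R) (S : {set 'I_d}) :
  scored_vote w v -> #|S| = k ->
  wmin w k <= \sum_(j in S) v j <= wmax w k.
Proof.
move=> /(scored_vote_sum S) [A cardA ->] cardS; rewrite cardS in cardA.
by rewrite wmin_le_sum ?sum_le_wmax.
Qed.

End ScoreBounds.

Definition normalized_score (R : realType) (d : nat) (w : 'I_d -> R) (k : nat)
    (v : 'I_d -> R) (S : {set 'I_d}) : R :=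
  (\sum_(j in S) v j - wmin w k) / (wmax w k - wmin w k).

Lemma additive_probE (R : realType) (eps : R) (d : nat) (w : 'I_d -> R)
    (k : nat) (v : 'I_d -> R) (S : {set 'I_d}) :
  additive_prob eps w k v S
  = (1 + (expR eps - 1) * normalized_score w k v S) / Phi eps w k.
Proof. by rewrite /additive_prob /normalized_score; ring. Qed.

Lemma normalized_score_itv (R : realType) (d : nat) (w : 'I_d -> R) (k : nat)
    (v : 'I_d -> R) (S : {set 'I_d}) :
  nonincreasing w -> (k <= d)%N -> wmin w k < wmax w k ->
  scored_vote w v -> #|S| = k ->
  0 <= normalized_score w k v S <= 1.
Proof.
move=> w_noninc k_le_d wmin_lt vote cardS.
have /andP[lo hi] := scored_vote_sum_bounds w_noninc k_le_d vote cardS.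
have gap_gt0 : 0 < wmax w k - wmin w k by rewrite subr_gt0.
rewrite /normalized_score divr_ge0 ?subr_ge0 ?(ltW wmin_lt) //=.
by rewrite ler_pdivrMr // mul1r lerD2r.
Qed.

Lemma Phi_gt0 (R : realType) (eps : R) (d : nat) (w : 'I_d -> R) (k : nat) :
  0 <= eps -> nonincreasing w -> (0 < k)%N -> (k <= d)%N ->
  wmin w k < wmax w k -> 0 < Phi eps w k.
Proof.
move=> eps_ge0 w_noninc k_gt0 k_le_d wmin_lt.
have e_ge1 : 1 <= expR eps.
  by apply: le_trans (expR_ge1Dx eps); rewrite lerDl.
have avg : wmin w k <= k%:R / d%:R * Wsum w.
  rewrite mulrAC ler_pdivlMr ?ltr0n ?(leq_trans k_gt0) // mulrC.
  exact: wmin_le_avg.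
rewrite /Phi divr_gt0 ?subr_gt0 // mulr_gt0 ?ltr0n ?bin_gt0 //.
have -> : k%:R / d%:R * (expR eps - 1) * Wsum w - expR eps * wmin w k + wmax w k
    = (expR eps - 1) * (k%:R / d%:R * Wsum w - wmin w k)
      + (wmax w k - wmin w k) by ring.
by rewrite ltr_wpDl ?mulr_ge0 ?subr_ge0 ?subr_gt0.
Qed.

Lemma ler_interp_ratio (R : realFieldType) (e P a b : R) :
  1 <= e -> 0 < P -> a <= 1 -> 0 <= b ->
  (1 + (e - 1) * a) / P <= e * ((1 + (e - 1) * b) / P).
Proof.
move=> e_ge1 P_gt0 a_le1 b_ge0; rewrite mulrA ler_pM2r ?invr_gt0 //.
have e1_ge0 : 0 <= e - 1 by rewrite subr_ge0.
apply: (@le_trans _ _ e).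
  by rewrite -lerBrDl ler_piMr.
by rewrite ler_peMr ?(le_trans ler01 e_ge1) // lerDl mulr_ge0.
Qed.

Theorem theorem6p2 (R : realType) (eps : R) (d : nat) (w : 'I_d -> R) (k : nat) :
  0 < eps ->
  nonincreasing w ->
  (1 <= k)%N -> (k <= d - 1)%N ->
  wmin w k < wmax w k ->
  forall v v' : 'I_d -> R, scored_vote w v -> scored_vote w v' ->
  forall S : {set 'I_d}, #|S| = k ->
    additive_prob eps w k v S <= expR eps * additive_prob eps w k v' S.
Proof.
move=> eps_gt0 w_noninc k_gt0 k_le_d1 wmin_lt v v' vote vote' S cardS.
have k_le_d : (k <= d)%N by apply: leq_trans k_le_d1 (leq_subr 1 d).
have /andP[_ a_le1] := normalized_score_itv w_noninc k_le_d wmin_lt vote cardS.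
have /andP[b_ge0 _] := normalized_score_itv w_noninc k_le_d wmin_lt vote' cardS.
rewrite !additive_probE; apply: ler_interp_ratio => //.
  by rewrite ltW // expR_gt1.
exact: Phi_gt0 (ltW eps_gt0) w_noninc k_gt0 k_le_d wmin_lt.
Qed.
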